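(* Let $n\ge1$, $0<q<\infty$ and $\pi\sim\mu_{n,q}$. Then $\mathrm{Var}(\mathrm{LIS}(\pi))\le n-1$. Furthermore, for all $t>0$, $$\mathbb{P}\big(|\mathrm{LIS}(\pi)-\mathbb{E}(\mathrm{LIS}(\pi))|>t\sqrt{n-1}\big)<2e^{-t^2/2}.$$
   Context: For $q>0$ and an integer $n\ge1$, the Mallows measure $\mu_{n,q}$ on $S_n$ is $\mu_{n,q}(\pi)=q^{\mathrm{inv}(\pi)}/Z_{n,q}$, where $\mathrm{inv}(\pi)$ is the number of pairs $i<j$ with $\pi(i)>\pi(j)$ and $Z_{n,q}$ is the normalizing constant. $\mathrm{LIS}(\pi)$ denotes the length of a longest increasing subsequence of $\pi$. *)

From HB Require Import structures.
From mathcomp Require Import all_boot all_order all_algebra all_fingroup.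
From mathcomp Require Import reals.
From mathcomp Require Import sequences exp.
Set Implicit Arguments. Unset Strict Implicit. Unset Printing Implicit Defensive.
Import Order.TTheory GRing.Theory Num.Theory.
Local Open Scope ring_scope.

Definition inv_perm (n : nat) (s : 'S_n) : nat :=
  #|[set p : 'I_n * 'I_n | (p.1 < p.2)%N && (s p.2 < s p.1)%N]|.

Definition increasing_on (n : nat) (s : 'S_n) (A : {set 'I_n}) : bool :=
  [forall i in A, forall j in A, (i < j)%N ==> (s i < s j)%N].

Definition LIS (n : nat) (s : 'S_n) : nat :=
  \max_(A : {set 'I_n} | increasing_on s A) #|A|.

Definition mallowsZ (R : realType) (n : nat) (q : R) : R :=
  \sum_(s : 'S_n) q ^+ inv_perm s.
Definition mallows (R : realType) (n : nat) (q : R) (s : 'S_n) : R :=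
  q ^+ inv_perm s / mallowsZ n q.

Definition mallows_E (R : realType) (n : nat) (q : R) (X : 'S_n -> R) : R :=
  \sum_(s : 'S_n) mallows q s * X s.
Definition mallows_P (R : realType) (n : nat) (q : R) (E : pred 'S_n) : R :=
  \sum_(s : 'S_n | E s) mallows q s.
Definition mallows_Var (R : realType) (n : nat) (q : R) (X : 'S_n -> R) : R :=
  mallows_E q (fun s => (X s - mallows_E q X) ^+ 2).

Definition LISR (R : realType) (n : nat) (s : 'S_n) : R := (LIS s)%:R.

From HB Require Import structures.
From mathcomp Require Import all_boot all_order all_algebra all_fingroup.
From mathcomp Require Import reals.
From mathcomp Require Import sequences exp.
From mathcomp Require Import zify ring lra.
Import Order.TTheory GRing.Theory Num.Theory.
Local Open Scope ring_scope.
Set Implicit Arguments. Unset Strict Implicit. Unset Printing Implicit Defensive.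

(* Sample the Mallows permutation sequentially: its first value a has the truncated geometric
   law q^a / (1 + q + ... + q^n), independently of the pattern of the remaining values, which
   is again Mallows, because inv (lift_perm 0 a s) = a + inv s.  Changing a single step of this
   sampling changes LIS by at most one.  Conditionally on the first step the means of such a
   function lie in an interval of length 1, so they have variance at most 1/4 and, for
   |lam| <= 1, exponential moment at most exp (lam^2 / 2) (from e^u <= 1 + u + 2 u^2).
   Induction gives Var <= n - 1 and E exp (lam (LIS - E LIS)) <= exp ((n - 1) lam^2 / 2);
   Chernoff's bound with lam = t / sqrt (n - 1) yields the tail estimate, and for larger t the
   event is empty since |LIS - E LIS| <= n - 1. *)

Lemma ltn_lift n (h : 'I_n.+1) (i j : 'I_n) : (lift h i < lift h j)%N = (i < j)%N.
Proof. by rewrite !ltnNge leq_bump2. Qed.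

Lemma ltn_lift_pivot n (h : 'I_n.+1) (i : 'I_n) : (lift h i < h)%N = (i < h)%N.
Proof. by rewrite !ltnNge /= leq_bump /unbump ltnn subn0. Qed.

Lemma lift_perm0_bij n :
  bijective (fun p : 'I_n.+1 * 'S_n => lift_perm ord0 p.1 p.2).
Proof.
apply: inj_card_bij; last by rewrite card_prod card_ord !card_Sn factS.
move=> [a s] [b t] /= eq_st.
have eq_ab : a = b by rewrite -(lift_perm_id ord0 a s) eq_st lift_perm_id.
subst b; congr pair; apply/permP => k; apply: (@lift_inj _ a).
by rewrite -(lift_perm_lift ord0 a s) -(lift_perm_lift ord0 a t) eq_st.
Qed.

Lemma lift_perm0P n (p : 'S_n.+1) : exists a s, p = lift_perm ord0 a s.
Proof. by have [g _ gK] := lift_perm0_bij n; exists (g p).1, (g p).2; rewrite gK. Qed.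

Lemma big_lift_perm0 (V : nmodType) n (F : 'S_n.+1 -> V) :
  \sum_(s : 'S_n.+1) F s = \sum_(a : 'I_n.+1) \sum_(s : 'S_n) F (lift_perm ord0 a s).
Proof. by rewrite pair_bigA (reindex _ (onW_bij _ (lift_perm0_bij n))). Qed.

Lemma inv_perm_sum n (s : 'S_n) :
  inv_perm s = (\sum_(i : 'I_n) \sum_(j : 'I_n) ((i < j)%N && (s j < s i)%N))%N.
Proof.
rewrite /inv_perm -sum1_card pair_bigA big_mkcond /=.
by apply: eq_bigr => p _; rewrite inE; case: ifP.
Qed.

Lemma inv_lift_perm0 n (a : 'I_n.+1) (s : 'S_n) :
  inv_perm (lift_perm ord0 a s) = (a + inv_perm s)%N.
Proof.
rewrite !inv_perm_sum big_ord_recl big_ord_recl /= add0n lift_perm_id.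
congr (_ + _)%N.
  under eq_bigr do rewrite lift_perm_lift ltn_lift_pivot.
  rewrite (reindex_inj (@perm_inj _ s^-1)) /=.
  under eq_bigr do rewrite permKV.
  have a_le_n : (a <= n)%N by rewrite -ltnS.
  by rewrite -big_mkcond /= (big_ord_narrow a_le_n) sum1_card card_ord.
apply: eq_bigr => i _; rewrite big_ord_recl /= add0n.
by apply: eq_bigr => j _; rewrite !lift_perm_lift ltn_lift ltnS.
Qed.

Section LongestIncreasing.
Variable n : nat.
Implicit Types (p : 'S_n) (A : {set 'I_n}).

Lemma increasing_onP p A :
  reflect {in A &, forall x y : 'I_n, (x < y)%N -> (p x < p y)%N} (increasing_on p A).
Proof.
apply: (iffP forall_inP) => [inc x y xA yA | inc x xA].
  by move/forall_inP/(_ y yA)/implyP: (inc x xA).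
by apply/forall_inP => y yA; apply/implyP; apply: inc.
Qed.

Lemma leq_card_LIS p A : increasing_on p A -> (#|A| <= LIS p)%N.
Proof. exact: (@leq_bigmax_cond _ (increasing_on p) (fun B : {set 'I_n} => #|B|)). Qed.

Lemma LIS_witness p : exists2 A, increasing_on p A & LIS p = #|A|.
Proof.
have inc0 : increasing_on p set0 by apply/increasing_onP => x; rewrite inE.
have [|A] := eq_bigmax_cond (fun B : {set 'I_n} => #|B|) (A := increasing_on p).
  by apply/card_gt0P; exists set0.
by exists A.
Qed.

End LongestIncreasing.

(* p1 and p2 differ only through the i-th step of the sequential sampling of the Mallows
   permutation: same values before position i, same relative order after it. *)
Definition agree_off n (i : nat) (p1 p2 : 'S_n) : Prop :=
  (forall j : 'I_n, (j < i)%N -> p1 j = p2 j) /\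
  (forall j k : 'I_n, (i < j)%N -> (i < k)%N -> (p1 j < p1 k)%N = (p2 j < p2 k)%N).

Lemma agree_off_sym n i (p1 p2 : 'S_n) : agree_off i p1 p2 -> agree_off i p2 p1.
Proof. by case=> eq_before ltn_after; split=> *; rewrite (eq_before, ltn_after). Qed.

Section AgreeOff.
Variables (n i : nat) (p1 p2 : 'S_n).
Hypothesis eq_before : forall j : 'I_n, (j < i)%N -> p1 j = p2 j.
Hypothesis ltn_after :
  forall j k : 'I_n, (i < j)%N -> (i < k)%N -> (p1 j < p1 k)%N = (p2 j < p2 k)%N.

Definition tail_rank (p : 'S_n) (c : nat) :=
  #|[set k : 'I_n | (i <= k)%N && (p k < c)%N]|.

Lemma tail_rank_eq c : tail_rank p1 c = tail_rank p2 c.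
Proof.
pose before (p : 'S_n) := [set k : 'I_n | (p k < c)%N] :&: [set k : 'I_n | (k < i)%N].
have split_lt (p : 'S_n) :
    #|[set v : 'I_n | (v < c)%N]| = (#|before p| + tail_rank p c)%N.
  rewrite -(card_preimset _ (@perm_inj _ p)).
  rewrite -(cardsID [set k : 'I_n | (k < i)%N] (p @^-1: [set v : 'I_n | (v < c)%N])).
  by congr (_ + _)%N; apply: eq_card => k; rewrite !inE // -leqNgt andbC.
have before12 : before p1 = before p2.
  apply/setP => k; rewrite !inE; case: (ltnP k i) => [k_lt_i|]; last by rewrite !andbF.
  by rewrite eq_before.
by apply/(@addnI (#|before p1|)); rewrite -split_lt before12 -split_lt.
Qed.

Lemma tail_rank_lt (p : 'S_n) (k : 'I_n) (c : nat) :
  (i <= k)%N -> (p k < c)%N -> ((tail_rank p (p k)).+1 <= tail_rank p c)%N.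
Proof.
move=> ik pkc; apply: proper_card; apply/properP; split.
  by apply/subsetP => k'; rewrite !inE => /andP[-> /ltn_trans->].
by exists k; rewrite !inE ?ltnn ik.
Qed.

Lemma tail_rank_after (y : 'I_n) :
  (i < y)%N -> (tail_rank p1 (p1 y) <= (tail_rank p2 (p2 y)).+1)%N.
Proof.
move=> iy; pose after (p : 'S_n) := [set k : 'I_n | (i < k)%N && (p k < p y)%N].
have after12 : after p1 = after p2.
  by apply/setP => k; rewrite !inE; case: ltnP => //= ik; rewrite ltn_after.
have at_i : (#|[set k : 'I_n | val k == i]| <= 1)%N.
  by apply/card_le1_eqP => x z; rewrite !inE => /eqP xi /eqP zi; apply: val_inj; rewrite xi zi.
have split1 : (tail_rank p1 (p1 y) <= #|[set k : 'I_n | val k == i]| + #|after p1|)%N.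
  apply: leq_trans (leq_card_setU _ _); apply: subset_leq_card; apply/subsetP => k.
  by rewrite !inE leq_eqVlt eq_sym => /andP[/orP[->|->] ->]; rewrite ?orbT.
have after2 : (#|after p2| <= tail_rank p2 (p2 y))%N.
  by apply: subset_leq_card; apply/subsetP => k; rewrite !inE => /andP[/ltnW-> ->].
rewrite after12 in split1; lia.
Qed.

(* Positions >= i carry the same values under p1 and p2, so the rank of p2 y among them is
   at least that of p1 y minus one (for position i). *)
Lemma leq_tail_after (e y : 'I_n) :
  (i <= e)%N -> (i < y)%N -> (p1 e < p1 y)%N -> (p1 e <= p2 y)%N.
Proof.
move=> ie iy ey; rewrite leqNgt; apply/negP => ye.
have := tail_rank_lt (ltnW iy) ye; rewrite -(tail_rank_eq (p1 e)).
have := tail_rank_lt ie ey; have := tail_rank_after iy; lia.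
Qed.

Definition drop_first_tail (A : {set 'I_n}) : {set 'I_n} :=
  [set e in A | (e < i)%N || [exists e' in A, (i <= e')%N && (e' < e)%N]].

Lemma card_drop_first_tail (A : {set 'I_n}) : (#|A| <= #|drop_first_tail A|.+1)%N.
Proof.
have sub : drop_first_tail A \subset A by apply/subsetP => x; rewrite inE => /andP[].
rewrite -(cardsID (drop_first_tail A) A) (setIidPr sub) -addn1 leq_add2l.
apply/card_le1_eqP => x z; rewrite !inE.
move=> /andP[+ xA] /andP[+ zA]; rewrite xA zA /= !negb_or -!leqNgt.
move=> /andP[ix /exists_inPn nx] /andP[iz /exists_inPn nz].
apply: val_inj; case: (ltngtP x z) => // [xz|zx].
  by have := nz x xA; rewrite ix xz.
by have := nx z zA; rewrite iz zx.
Qed.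

Lemma increasing_drop_first_tail (A : {set 'I_n}) :
  increasing_on p1 A -> increasing_on p2 (drop_first_tail A).
Proof.
move=> /increasing_onP incA; apply/increasing_onP => x y.
rewrite !inE => /andP[xA hx] /andP[yA hy] xy.
case: (ltnP y i) => [yi|iy].
  by rewrite -!eq_before ?(ltn_trans xy yi) //; apply: incA.
case: (ltnP x i) => [xi|ix].
  move: hy; rewrite ltnNge iy /= => /exists_inP[e eA /andP[ie ey]].
  have p1e_le_p2y := leq_tail_after ie (leq_ltn_trans ie ey) (incA _ _ eA yA ey).
  by rewrite -eq_before //; apply: leq_trans p1e_le_p2y; apply: incA xA eA (leq_trans xi ie).
move: hx; rewrite ltnNge ix /= => /exists_inP[e eA /andP[ie ex]].
have i_lt_x := leq_ltn_trans ie ex.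
by rewrite -ltn_after ?(ltn_trans i_lt_x xy) //; apply: incA.
Qed.

End AgreeOff.

Lemma LIS_agree_off n i (p1 p2 : 'S_n) : agree_off i p1 p2 -> (LIS p1 <= (LIS p2).+1)%N.
Proof.
case=> eq_before ltn_after; have [A incA ->] := LIS_witness p1.
apply: leq_trans (card_drop_first_tail i A) _; rewrite ltnS.
exact/leq_card_LIS/(increasing_drop_first_tail eq_before ltn_after).
Qed.

Lemma expR_le_quad (R : realType) (u : R) : `|u| <= 1 -> expR u <= 1 + u + 2 * u ^+ 2.
Proof.
rewrite ler_norml => /andP[u_ge u_le].
have expR_ge_sqr : (1 - u / 2) ^+ 2 <= expR (- u).
  have -> : expR (- u) = expR (- u / 2) ^+ 2 by rewrite -expRM_natr; congr expR; field.
  by rewrite lerXn2r ?nnegrE ?expR_ge0 ?(le_trans _ (expR_ge1Dx _)) //; lra.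
(* (1 - u/2)^2 (1 + u + 2u^2) = 1 + u^2 (1 - u) (5 - 2u) / 4 *)
have poly_ge1 : 1 <= (1 - u / 2) ^+ 2 * (1 + u + 2 * u ^+ 2).
  have : 0 <= u ^+ 2 * ((1 - u) * (5 - 2 * u)) by rewrite mulr_ge0 ?sqr_ge0 ?mulr_ge0 //; lra.
  nra.
have key : 1 <= expR (- u) * (1 + u + 2 * u ^+ 2).
  by apply: le_trans poly_ge1 _; rewrite ler_wpM2r //; nra.
have := ler_wpM2l (expR_ge0 u) key.
by rewrite mulr1 mulrA expRxMexpNx_1 mul1r.
Qed.

Lemma sum_abs_gt (R : realDomainType) (I : finType) (F X : I -> R) (s : R) : 0 <= s ->
  \sum_(i | s < `|X i|) F i = \sum_(i | s < X i) F i + \sum_(i | s < - X i) F i.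
Proof.
move=> s_ge0; rewrite (bigID (fun i => s < X i)) /=.
congr (_ + _); apply: eq_bigl => i; rewrite ltr_normr.
  by rewrite andb_idl // => ->.
case: (boolP (s < X i)) => Xi_gt /=; last by rewrite andbT.
have Xi_ge0 : 0 <= X i := le_trans s_ge0 (ltW Xi_gt).
by apply/esym/negbTE; rewrite -leNgt (le_trans _ s_ge0) // oppr_le0.
Qed.

Lemma sumr_gt0 (R : numDomainType) (I : finType) (i0 : I) (F : I -> R) :
  (forall i, 0 < F i) -> 0 < \sum_i F i.
Proof.
move=> F_gt0; rewrite (bigD1 i0) //= ltr_pwDl //.
by rewrite sumr_ge0 // => i _; apply: ltW.
Qed.

Section Average.
Variables (R : realType) (I : finType) (w : I -> R).
Hypothesis w_ge0 : forall i, 0 <= w i.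
Hypothesis w_sum1 : \sum_i w i = 1.
Implicit Types X Y : I -> R.

Definition avg X : R := \sum_i w i * X i.

Lemma eq_avg X Y : X =1 Y -> avg X = avg Y.
Proof. by move=> XY; apply: eq_bigr => i _; rewrite XY. Qed.

Lemma avgD X Y : avg (fun i => X i + Y i) = avg X + avg Y.
Proof. by rewrite /avg -big_split; apply: eq_bigr => i _; rewrite mulrDr. Qed.

Lemma avgZ c X : avg (fun i => c * X i) = c * avg X.
Proof. by rewrite /avg mulr_sumr; apply: eq_bigr => i _; rewrite mulrCA. Qed.

Lemma avg_cst c : avg (fun=> c) = c.
Proof. by rewrite /avg -mulr_suml w_sum1 mul1r. Qed.

Lemma avgB X Y : avg (fun i => X i - Y i) = avg X - avg Y.
Proof.
rewrite (@eq_avg _ (fun i => X i + -1 * Y i)) => [|i]; last by ring.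
by rewrite avgD avgZ; ring.
Qed.

Lemma ler_avg X Y : (forall i, X i <= Y i) -> avg X <= avg Y.
Proof. by move=> XY; apply: ler_sum => i _; rewrite ler_wpM2l. Qed.

Lemma avg_dist_le c X Y : (forall i, `|X i - Y i| <= c) -> `|avg X - avg Y| <= c.
Proof.
move=> XY; rewrite -avgB ler_norml -[X in X <= _ <= _](avg_cst (- c)).
rewrite -[X in _ <= _ <= X](avg_cst c).
by apply/andP; split; apply: ler_avg => i; have := XY i; rewrite ler_norml => /andP[].
Qed.

Lemma dist_avg_le c X : (forall i j, `|X i - X j| <= c) -> forall i, `|X i - avg X| <= c.
Proof. by move=> XX i; rewrite -{1}(avg_cst (X i)); apply: avg_dist_le => j; apply: XX. Qed.

Lemma exists_min X : exists i, forall j, X i <= X j.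
Proof.
have [i0 _|I0] := pickP (@predT I); last first.
  by move: w_sum1; rewrite big_pred0 // => /eqP; rewrite eq_sym oner_eq0.
have [i _ i_min] := @arg_minP _ _ _ i0 predT X isT.
by exists i => j; apply: i_min.
Qed.

Lemma exists_le_avg X : exists i, X i <= avg X.
Proof.
have [i i_min] := exists_min X.
by exists i; rewrite -[X i]avg_cst; apply: ler_avg.
Qed.

Lemma avg_sqr_dev X c :
  avg (fun i => (X i - c) ^+ 2) = avg (fun i => (X i - avg X) ^+ 2) + (avg X - c) ^+ 2.
Proof.
set m := avg X.
rewrite (@eq_avg _ (fun i => (X i - m) ^+ 2 + (2 * (m - c) * X i + (c ^+ 2 - m ^+ 2)))).
  by rewrite avgD avgD avgZ avg_cst -/m; ring.
by move=> i; ring.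
Qed.

Lemma avg_var_le_quarter X : (forall i j, `|X i - X j| <= 1) ->
  avg (fun i => (X i - avg X) ^+ 2) <= 1 / 4.
Proof.
move=> XX; have [i0 i0_min] := exists_min X.
(* Popoviciu: the variance is at most the mean square distance to the midpoint of the range. *)
pose mid := X i0 + 1 / 2.
apply: (@le_trans _ _ (avg (fun i => (X i - mid) ^+ 2))).
  by rewrite (avg_sqr_dev X mid) lerDl sqr_ge0.
rewrite -[X in _ <= X](avg_cst (1 / 4)); apply: ler_avg => i.
have := XX i i0; rewrite ler_norml => /andP[_ Xi_le]; have := i0_min i.
rewrite /mid; nra.
Qed.

Lemma avg_expR_le X lam : (forall i j, `|X i - X j| <= 1) -> `|lam| <= 1 ->
  avg (fun i => expR (lam * (X i - avg X))) <= expR (lam ^+ 2 / 2).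
Proof.
move=> XX lam_le1; set m := avg X.
apply: (@le_trans _ _ (avg (fun i => 1 + lam * (X i - m) + 2 * (lam * (X i - m)) ^+ 2))).
  apply: ler_avg => i; apply: expR_le_quad; rewrite normrM.
  by rewrite -[1]mul1r ler_pM ?normr_ge0 //; apply: dist_avg_le.
rewrite (@eq_avg _ (fun i => 1 + (lam * (X i - m) + (2 * lam ^+ 2) * (X i - m) ^+ 2))); last first.
  by move=> i; ring.
rewrite avgD avg_cst avgD avgZ avgB avgZ avg_cst -/m subrr mulr0 add0r.
apply: le_trans (expR_ge1Dx _); rewrite lerD2l.
have := avg_var_le_quarter XX; have := sqr_ge0 lam; nra.
Qed.

Lemma chernoff_avg (w_gt0 : forall i, 0 < w i) X s lam B :
  avg X <= s -> 0 <= lam -> avg (fun i => expR (lam * X i)) <= B ->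
  \sum_(i | s < X i) w i < expR (- (lam * s)) * B.
Proof.
move=> avg_le_s lam_ge0 mgf_le.
have [i0 Xi0] := exists_le_avg X.
pose F i := w i * expR (lam * (X i - s)).
have F_gt0 i : 0 < F i by rewrite mulr_gt0 ?expR_gt0.
apply: (@lt_le_trans _ _ (\sum_i F i)).
  rewrite [Z in _ < Z](bigID (fun i => s < X i)) /=.
  have tail_le : \sum_(i | s < X i) w i <= \sum_(i | s < X i) F i.
    apply: ler_sum => i Xi_gt; rewrite -[X in X <= _]mulr1 ler_wpM2l //.
    by rewrite -expR0 ler_expR mulr_ge0 // subr_ge0 ltW.
  have rest_gt0 : 0 < \sum_(i | ~~ (s < X i)) F i.
    rewrite (bigD1 i0) /= -?leNgt ?(le_trans Xi0) //.
    by rewrite ltr_pwDl ?sumr_ge0 // => i _; apply: ltW.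
  lra.
have -> : \sum_i F i = expR (- (lam * s)) * avg (fun i => expR (lam * X i)).
  rewrite /avg mulr_sumr; apply: eq_bigr => i _.
  by rewrite /F mulrCA -expRD; congr (_ * expR _); ring.
by rewrite ler_wpM2l ?expR_ge0.
Qed.

Lemma chernoff_abs_avg (w_gt0 : forall i, 0 < w i) X s lam B :
  avg X = 0 -> 0 <= s -> 0 <= lam ->
  avg (fun i => expR (lam * X i)) <= B -> avg (fun i => expR (- lam * X i)) <= B ->
  \sum_(i | s < `|X i|) w i < 2 * (expR (- (lam * s)) * B).
Proof.
move=> avgX0 s_ge0 lam_ge0 mgf_le mgfN_le.
rewrite (sum_abs_gt _ _ s_ge0) mulr2n mulrDl mul1r.
apply: ltrD; apply: chernoff_avg => //; first by rewrite avgX0.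
  by rewrite (@eq_avg _ (fun i => -1 * X i)) => [|i]; rewrite ?avgZ ?avgX0 ?mulr0 // mulN1r.
by rewrite (@eq_avg _ (fun i => expR (- lam * X i))) => // i; rewrite mulrN mulNr.
Qed.

End Average.

Definition geom_weight (R : realType) (q : R) n (a : 'I_n.+1) : R :=
  q ^+ a / \sum_(b < n.+1) q ^+ b.

Section MallowsMeasure.
Variables (R : realType) (q : R).
Hypothesis q_gt0 : 0 < q.

Lemma mallowsZ_gt0 n : 0 < mallowsZ n q.
Proof. by apply: (sumr_gt0 1%g) => s; rewrite exprn_gt0. Qed.

Lemma mallows_gt0 n (s : 'S_n) : 0 < mallows q s.
Proof. by rewrite divr_gt0 ?exprn_gt0 ?mallowsZ_gt0. Qed.

Lemma mallows_sum1 n : \sum_(s : 'S_n) mallows q s = 1.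
Proof. by rewrite -mulr_suml divff // gt_eqF // mallowsZ_gt0. Qed.

Lemma geom_sum_gt0 n : 0 < \sum_(b < n.+1) q ^+ b.
Proof. by apply: (sumr_gt0 ord0) => b; rewrite exprn_gt0. Qed.

Lemma geom_weight_gt0 n (a : 'I_n.+1) : 0 < geom_weight q a.
Proof. by rewrite divr_gt0 ?exprn_gt0 ?geom_sum_gt0. Qed.

Lemma geom_weight_sum1 n : \sum_(a < n.+1) geom_weight q a = 1.
Proof. by rewrite -mulr_suml divff // gt_eqF // geom_sum_gt0. Qed.

Lemma mallowsZ_lift0 n : mallowsZ n.+1 q = (\sum_(b < n.+1) q ^+ b) * mallowsZ n q.
Proof.
rewrite /mallowsZ big_lift_perm0 mulr_suml; apply: eq_bigr => a _.
by rewrite mulr_sumr; apply: eq_bigr => s _; rewrite inv_lift_perm0 exprD.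
Qed.

Lemma mallows_lift0 n (a : 'I_n.+1) (s : 'S_n) :
  mallows q (lift_perm ord0 a s) = geom_weight q a * mallows q s.
Proof.
rewrite /mallows /geom_weight inv_lift_perm0 exprD mallowsZ_lift0.
by field; rewrite !gt_eqF ?mallowsZ_gt0 ?geom_sum_gt0.
Qed.

Lemma mallows_E_lift0 n (X : 'S_n.+1 -> R) :
  mallows_E q X = avg (geom_weight q (n:=n))
                      (fun a => mallows_E q (fun s => X (lift_perm ord0 a s))).
Proof.
rewrite /mallows_E big_lift_perm0; apply: eq_bigr => a _.
by rewrite mulr_sumr; apply: eq_bigr => s _; rewrite mallows_lift0 mulrA.
Qed.

End MallowsMeasure.

Definition bounded_diff (R : realType) n (f : 'S_n -> R) : Prop :=
  forall i p1 p2, agree_off i p1 p2 -> `|f p1 - f p2| <= 1.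

Lemma bounded_diff_LISR (R : realType) n : bounded_diff (@LISR R n).
Proof.
move=> i p1 p2 agree; rewrite /LISR ler_norml.
have le12 : (LIS p1)%:R <= (LIS p2)%:R + 1 :> R.
  by rewrite natr1 ler_nat; apply: LIS_agree_off agree.
have le21 : (LIS p2)%:R <= (LIS p1)%:R + 1 :> R.
  by rewrite natr1 ler_nat; apply: LIS_agree_off (agree_off_sym agree).
apply/andP; split; lra.
Qed.

Lemma agree_off_lift0 n i (a : 'I_n.+1) (s1 s2 : 'S_n) :
  agree_off i s1 s2 -> agree_off i.+1 (lift_perm ord0 a s1) (lift_perm ord0 a s2).
Proof.
case=> eq_before ltn_after; split=> [j|j k].
  case: (unliftP ord0 j) => [j'|] -> /=; rewrite ?lift_perm_id //.
  by rewrite !lift_perm_lift => /eq_before->.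
case: (unliftP ord0 j) => [j'|] -> //; case: (unliftP ord0 k) => [k'|] -> //.
by rewrite !lift_perm_lift !ltn_lift; apply: ltn_after.
Qed.

Lemma agree_off0_lift0 n (a b : 'I_n.+1) (s : 'S_n) :
  agree_off 0 (lift_perm ord0 a s) (lift_perm ord0 b s).
Proof.
split=> // j k; case: (unliftP ord0 j) => [j'|] -> //; case: (unliftP ord0 k) => [k'|] -> //.
by rewrite !lift_perm_lift !ltn_lift.
Qed.

Lemma bounded_diff_lift0 (R : realType) n (f : 'S_n.+1 -> R) (a : 'I_n.+1) :
  bounded_diff f -> bounded_diff (fun s => f (lift_perm ord0 a s)).
Proof. by move=> f_bd i s1 s2 /(agree_off_lift0 a)/f_bd. Qed.

Lemma perm1_eq1 (s : 'S_1) : s = 1%g.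
Proof. by apply/permP => i; rewrite !ord1. Qed.

Lemma bounded_diff_dist (R : realType) n (f : 'S_n.+1 -> R) :
  bounded_diff f -> forall p1 p2, `|f p1 - f p2| <= n%:R.
Proof.
elim: n f => [|n IHn] f f_bd p1 p2.
  by rewrite (perm1_eq1 p1) (perm1_eq1 p2) subrr normr0.
have [a [s ->]] := lift_perm0P p1; have [b [t ->]] := lift_perm0P p2.
rewrite -natr1; apply: le_trans (ler_distD (f (lift_perm ord0 a t)) _ _) _.
rewrite lerD ?(IHn _ (bounded_diff_lift0 a f_bd)) //.
exact: f_bd (agree_off0_lift0 a b t).
Qed.

Section MallowsConcentration.
Variables (R : realType) (q : R).
Hypothesis q_gt0 : 0 < q.
Local Notation E := (mallows_E q).
Let mallows_ge0 n (s : 'S_n) : 0 <= mallows q s := ltW (mallows_gt0 q_gt0 s).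
Let geom_weight_ge0 n (a : 'I_n.+1) : 0 <= geom_weight q a := ltW (geom_weight_gt0 q_gt0 a).

Lemma mallows_E_avg n (X : 'S_n -> R) : E X = avg (mallows q) X.
Proof. by []. Qed.

Lemma mallows_E_S1 (X : 'S_1 -> R) : E X = X 1%g.
Proof.
rewrite mallows_E_avg -[RHS](avg_cst (mallows_sum1 q_gt0 1)).
by apply: eq_avg => s; rewrite (perm1_eq1 s).
Qed.

Lemma mallows_E_lift0_dist n (f : 'S_n.+1 -> R) (a b : 'I_n.+1) : bounded_diff f ->
  `|E (fun s => f (lift_perm ord0 a s)) - E (fun s => f (lift_perm ord0 b s))| <= 1.
Proof.
move=> f_bd; apply: (avg_dist_le (@mallows_ge0 n) (mallows_sum1 q_gt0 n)) => s.
exact: f_bd (agree_off0_lift0 a b s).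
Qed.

Lemma mallows_Var_le n (f : 'S_n.+1 -> R) : bounded_diff f -> mallows_Var q f <= n%:R.
Proof.
elim: n f => [|n IHn] f f_bd; first by rewrite /mallows_Var !mallows_E_S1 subrr expr0n.
pose g a := E (fun s => f (lift_perm ord0 a s)).
have g_close a b : `|g a - g b| <= 1 := mallows_E_lift0_dist a b f_bd.
rewrite /mallows_Var (mallows_E_lift0 q_gt0 f) -/g; set mu := avg _ g.
rewrite [X in X <= _](mallows_E_lift0 q_gt0).
apply: (@le_trans _ _ (avg (geom_weight q (n:=n.+1)) (fun a => n%:R + (g a - mu) ^+ 2))).
  apply: (ler_avg (@geom_weight_ge0 _)) => a.
  rewrite mallows_E_avg (avg_sqr_dev (mallows_sum1 q_gt0 _)) lerD2r.
  exact: IHn (bounded_diff_lift0 a f_bd).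
rewrite (avgD _ (fun=> n%:R)) (avg_cst (geom_weight_sum1 q_gt0 _)) -natr1 lerD2l.
apply: le_trans (avg_var_le_quarter (@geom_weight_ge0 _) (geom_weight_sum1 q_gt0 _) g_close) _.
lra.
Qed.

Lemma mallows_mgf_le n (f : 'S_n.+1 -> R) lam : bounded_diff f -> `|lam| <= 1 ->
  E (fun s => expR (lam * (f s - E f))) <= expR (n%:R * lam ^+ 2 / 2).
Proof.
elim: n f => [|n IHn] f f_bd lam_le1.
  by rewrite !mallows_E_S1 subrr !mulr0 !mul0r.
pose g a := E (fun s => f (lift_perm ord0 a s)).
have g_close a b : `|g a - g b| <= 1 := mallows_E_lift0_dist a b f_bd.
pose B := expR (n%:R * lam ^+ 2 / 2).
rewrite (mallows_E_lift0 q_gt0 f) -/g; set mu := avg _ g.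
rewrite [X in X <= _](mallows_E_lift0 q_gt0).
have cond_mgf a : E (fun s => expR (lam * (f (lift_perm ord0 a s) - mu)))
                  <= B * expR (lam * (g a - mu)).
  rewrite mulrC mallows_E_avg.
  rewrite (@eq_avg _ _ _ _ (fun s => expR (lam * (g a - mu)) *
                                expR (lam * (f (lift_perm ord0 a s) - g a)))); last first.
    by move=> s; rewrite -expRD; congr expR; ring.
  by rewrite avgZ ler_wpM2l ?expR_ge0 //; apply: IHn (bounded_diff_lift0 a f_bd) lam_le1.
apply: le_trans (ler_avg (@geom_weight_ge0 _) cond_mgf) _.
rewrite avgZ; apply: le_trans (ler_wpM2l (expR_ge0 _)
  (avg_expR_le (@geom_weight_ge0 _) (geom_weight_sum1 q_gt0 _) g_close lam_le1)) _.
have -> : n.+1%:R * lam ^+ 2 / 2 = n%:R * lam ^+ 2 / 2 + lam ^+ 2 / 2 by rewrite -natr1; ring.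
by rewrite expRD.
Qed.

Lemma mallows_tail_lt m (f : 'S_m.+1 -> R) t : bounded_diff f -> 0 < t ->
  mallows_P q (fun s => t * Num.sqrt m%:R < `|f s - E f|) < 2 * expR (- (t ^+ 2) / 2).
Proof.
move=> f_bd t_gt0; set r := Num.sqrt m%:R.
have r_ge0 : 0 <= r := sqrtr_ge0 _.
have rr : r ^+ 2 = m%:R by rewrite sqr_sqrtr.
(* The mgf bound needs |lam| <= 1, i.e. t < r; otherwise the deviation never exceeds m <= t r. *)
have [r_le_t|t_lt_r] := lerP r t.
  rewrite /mallows_P big_pred0 ?mulr_gt0 ?expR_gt0 // => s; apply/negbTE; rewrite -leNgt.
  apply: le_trans (_ : m%:R <= t * r); last by rewrite -rr expr2 ler_wpM2r.
  exact: (dist_avg_le (@mallows_ge0 _) (mallows_sum1 q_gt0 _) (bounded_diff_dist f_bd)).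
have r_gt0 : 0 < r := lt_trans t_gt0 t_lt_r.
pose lam := t / r; pose B := expR (m%:R * lam ^+ 2 / 2).
have lam_gt0 : 0 < lam by rewrite divr_gt0.
have lam_le1 : `|lam| <= 1 by rewrite gtr0_norm // ler_pdivrMr // mul1r ltW.
have bound_eq : expR (- (lam * (t * r))) * B = expR (- (t ^+ 2) / 2).
  by rewrite /B -expRD -rr /lam; congr expR; field; rewrite gt_eqF.
rewrite -bound_eq; apply: (chernoff_abs_avg (@mallows_ge0 _) (mallows_sum1 q_gt0 _)
  (@mallows_gt0 _ _ q_gt0 _) (X := fun s => f s - E f)).
- by rewrite avgB (avg_cst (mallows_sum1 q_gt0 _)) subrr.
- by rewrite mulr_ge0 // ltW.
- exact: ltW.
- exact: (mallows_mgf_le f_bd lam_le1).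
by rewrite /B -(sqrrN lam); apply: mallows_mgf_le; rewrite ?normrN.
Qed.

End MallowsConcentration.

Theorem proposition1p8 (R : realType) (n : nat) (q : R) :
  (1 <= n)%N -> 0 < q ->
  mallows_Var q (@LISR R n) <= (n - 1)%:R /\
  (forall t : R, 0 < t ->
     mallows_P q (fun s : 'S_n =>
        `|LISR R s - mallows_E q (@LISR R n)| > t * Num.sqrt ((n - 1)%:R))
     < 2 * expR (- (t ^+ 2) / 2)).
Proof.
case: n => // m _ q_gt0; rewrite subn1 /=.
have LIS_bd := @bounded_diff_LISR R m.+1.
split; first exact: mallows_Var_le.
by move=> t; apply: mallows_tail_lt.
Qed.
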